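(* Let $n\ge 1$, let $\mathbf{A}\in\mathbb{R}^{n\times n}$ be symmetric positive semidefinite, $\mathbf{b}\in\mathbb{R}^n$, and let $h(\mathbf{x})=\sum_{i=1}^n \varphi(\mathbf{x}_i)$, where $\varphi:\mathbb{R}\to\mathbb{R}\cup\{+\infty\}$ is proper, lower semicontinuous and convex. Put $f(\mathbf{x})=\tfrac12\mathbf{x}^T\mathbf{A}\mathbf{x}+\mathbf{x}^T\mathbf{b}+h(\mathbf{x})$. Write $\mathbf{A}=\mathbf{L}+\mathbf{D}+\mathbf{L}^T$, where $\mathbf{D}$ is the diagonal part and $\mathbf{L}$ the strictly lower triangular part of $\mathbf{A}$. Fix $\omega\in(0,2)$ and $\theta\in[0,\infty)$ with $\mathbf{D}_{i,i}+\theta>0$ for all $i$. Set $\mathbf{B}=\mathbf{L}+\tfrac1\omega(\mathbf{D}+\theta\mathbf{I})$ and $\mathbf{C}=\mathbf{L}^T+\tfrac1\omega((\omega-1)\mathbf{D}-\theta\mathbf{I})$, so that $\mathbf{A}=\mathbf{B}+\mathbf{C}$. For $\mathbf{x}\in\mathbb{R}^n$ let $\mathcal{T}(\mathbf{x})$ be the unique $\mathbf{z}\in\mathbb{R}^n$ with $\mathbf{0}\in\mathbf{B}\mathbf{z}+\mathbf{b}+\mathbf{C}\mathbf{x}+\partial h(\mathbf{z})$. Then for all $\mathbf{x},\mathbf{y}\in\mathbb{R}^n$: (a) there exists $\mathbf{v}\in\partial h(\mathcal{T}(\mathbf{x}))$ such that $\|\mathbf{A}\mathcal{T}(\mathbf{x})+\mathbf{b}+\mathbf{v}\|\le\|\mathbf{C}\|\,\|\mathbf{x}-\mathcal{T}(\mathbf{x})\|$;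 (b) $f(\mathcal{T}(\mathbf{y}))-f(\mathbf{x})\le\langle\mathcal{T}(\mathbf{y})-\mathbf{x},\,\mathbf{C}(\mathcal{T}(\mathbf{y})-\mathbf{y})\rangle-\tfrac12(\mathbf{x}-\mathcal{T}(\mathbf{y}))^T\mathbf{A}(\mathbf{x}-\mathcal{T}(\mathbf{y}))$.
   Context: $\partial h$ denotes the convex subdifferential. $\|\cdot\|$ is the Euclidean norm on vectors and the spectral norm (largest singular value) on matrices. Since $\mathbf{B}$ is lower triangular with positive diagonal and $h$ is separable, $\mathcal{T}(\mathbf{x})$ is well defined and can be computed by forward substitution: with $\mathbf{u}=\mathbf{b}+\mathbf{C}\mathbf{x}$, for $j=1,\dots,n$, $\mathbf{z}_j=\arg\min_t \tfrac12\mathbf{B}_{j,j}t^2+(\mathbf{u}_j+\sum_{i<j}\mathbf{B}_{j,i}\mathbf{z}_i)t+\varphi(t)$. *)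

From HB Require Import structures.
From mathcomp Require Import all_boot all_order all_algebra.
From mathcomp Require Import all_classical all_reals all_analysis.
Set Implicit Arguments. Unset Strict Implicit. Unset Printing Implicit Defensive.
Import Order.TTheory GRing.Theory Num.Theory.
Import numFieldNormedType.Exports.
Local Open Scope ring_scope.
Local Open Scope classical_set_scope.

Section Defs.
Context {R : realType} {n : nat}.

Definition dotv (u v : 'cV[R]_n) : R := (u^T *m v) 0 0.
Definition enorm (u : 'cV[R]_n) : R := Num.sqrt (\sum_(i < n) (u i 0) ^+ 2).
Definition quadf (M : 'M[R]_n) (x : 'cV[R]_n) : R := (x^T *m M *m x) 0 0.

Definition spec_norm (C : 'M[R]_n) : R :=
  Num.sqrt (sup [set l : R | eigenvalue (C^T *m C) l]).

Definition sym_psd (A : 'M[R]_n) : Prop :=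
  A^T = A /\ forall x : 'cV[R]_n, 0 <= quadf A x.

Definition diag_part (A : 'M[R]_n) : 'M[R]_n :=
  \matrix_(i, j) (if i == j then A i j else 0).
Definition slower_part (A : 'M[R]_n) : 'M[R]_n :=
  \matrix_(i, j) (if (j < i)%N then A i j else 0).

Definition Bmat (A : 'M[R]_n) (om th : R) : 'M[R]_n :=
  slower_part A + om^-1 *: (diag_part A + th%:M).
Definition Cmat (A : 'M[R]_n) (om th : R) : 'M[R]_n :=
  (slower_part A)^T + om^-1 *: ((om - 1) *: diag_part A - th%:M).

Definition sep_h (phi : R -> \bar R) (x : 'cV[R]_n) : \bar R :=
  (\sum_(i < n) phi (x i ord0))%E.

Definition subdiff (h : 'cV[R]_n -> \bar R) (z v : 'cV[R]_n) : Prop :=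
  (h z < +oo)%E /\ forall y, (h z + (dotv v (y - z))%:E <= h y)%E.

Definition fobj (A : 'M[R]_n) (b : 'cV[R]_n) (phi : R -> \bar R)
    (x : 'cV[R]_n) : \bar R :=
  ((2^-1 * quadf A x + dotv x b)%:E + sep_h phi x)%E.

Definition is_T (A : 'M[R]_n) (b : 'cV[R]_n) (phi : R -> \bar R) (om th : R)
    (x z : 'cV[R]_n) : Prop :=
  exists v, subdiff (sep_h phi) z v /\
    Bmat A om th *m z + b + Cmat A om th *m x + v = 0.

End Defs.

Definition proper_ext {R : realType} (phi : R -> \bar R) : Prop :=
  (exists t, (phi t < +oo)%E) /\ (forall t, (-oo < phi t)%E).

Definition convex_ext {R : realType} (phi : R -> \bar R) : Prop :=
  forall (a c t : R), (0 < t < 1)%R ->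
    (phi (t * a + (1 - t) * c)%R <= t%:E * phi a + (1 - t)%:E * phi c)%E.

From HB Require Import structures.
From mathcomp Require Import all_boot all_order all_algebra.
From mathcomp Require Import all_classical all_reals all_analysis.
From mathcomp Require Import ring lra.
Set Implicit Arguments.
Unset Strict Implicit.
Unset Printing Implicit Defensive.
Import Order.TTheory GRing.Theory Num.Theory.
Import numFieldNormedType.Exports.
Local Open Scope classical_set_scope.
Local Open Scope ring_scope.

(* Since A = B + C, z = T(x) means that v := -(B z + b + C x) is a subgradient
   of h at z with A z + b + v = C (z - x), so (a) is the operator-norm bound
   for C.  For (b), the subgradient inequality bounds h(z) - h(x) by
   <v, z - x>, and the quadratic part of f is its first-order expansion at z
   minus (x - z)^T A (x - z) / 2.
   The spectral norm is defined through the eigenvalues of C^T C; it dominates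
   the Rayleigh quotients of C^T C because, for symmetric M, the supremum mu of
   the Rayleigh quotients is itself an eigenvalue: otherwise M - mu I would be
   invertible and negative semidefinite, hence uniformly negative definite,
   and mu would not be the supremum. *)

Section InnerProduct.
Context {R : realType} {n : nat}.
Implicit Types (u w t : 'cV[R]_n) (M : 'M[R]_n).

Lemma dotvE u w : dotv u w = \sum_i u i 0 * w i 0.
Proof. by rewrite /dotv !mxE; apply: eq_bigr => i _; rewrite !mxE. Qed.

Lemma dotvC u w : dotv u w = dotv w u.
Proof. by rewrite !dotvE; apply: eq_bigr => i _; rewrite mulrC. Qed.

Lemma dotvDl u w t : dotv (u + w) t = dotv u t + dotv w t.
Proof.
by rewrite !dotvE -big_split; apply: eq_bigr => i _; rewrite !mxE mulrDl.
Qed.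

Lemma dotvDr u w t : dotv t (u + w) = dotv t u + dotv t w.
Proof. by rewrite dotvC dotvDl !(dotvC t). Qed.

Lemma dotvZl a u w : dotv (a *: u) w = a * dotv u w.
Proof.
by rewrite !dotvE mulr_sumr; apply: eq_bigr => i _; rewrite !mxE mulrA.
Qed.

Lemma dotvZr a u w : dotv w (a *: u) = a * dotv w u.
Proof. by rewrite dotvC dotvZl dotvC. Qed.

Lemma dotvNl u w : dotv (- u) w = - dotv u w.
Proof. by rewrite -scaleN1r dotvZl mulN1r. Qed.

Lemma dotvNr u w : dotv w (- u) = - dotv w u.
Proof. by rewrite dotvC dotvNl dotvC. Qed.

Lemma dotvBl u w t : dotv (u - w) t = dotv u t - dotv w t.
Proof. by rewrite dotvDl dotvNl. Qed.

Lemma dotvBr u w t : dotv t (u - w) = dotv t u - dotv t w.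
Proof. by rewrite dotvDr dotvNr. Qed.

Lemma dotv0l u : dotv 0 u = 0.
Proof. by rewrite -(scale0r u) dotvZl mul0r. Qed.

Lemma dotv_mulmxr u M w : dotv u (M *m w) = dotv (M^T *m u) w.
Proof. by rewrite /dotv trmx_mul trmxK mulmxA. Qed.

Lemma quadfE M u : quadf M u = dotv u (M *m u).
Proof. by rewrite /quadf /dotv mulmxA. Qed.

Lemma dotv_ge0 u : 0 <= dotv u u.
Proof. by rewrite dotvE sumr_ge0 // => i _; rewrite -expr2 sqr_ge0. Qed.

Lemma dotv_gt0 u : u != 0 -> 0 < dotv u u.
Proof.
move=> u0; rewrite lt_def dotv_ge0 andbT; apply: contraNN u0 => /eqP.
rewrite dotvE => /psumr_eq0P u2_eq0; apply/eqP/matrixP => i j.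
rewrite (ord1 j) mxE; apply/eqP; rewrite -sqrf_eq0 expr2 u2_eq0 // => k _.
by rewrite -expr2 sqr_ge0.
Qed.

Lemma sqr_le_dotv u i : u i 0 ^+ 2 <= dotv u u.
Proof.
rewrite dotvE (bigD1 i) //= -expr2 lerDl sumr_ge0 // => k _.
by rewrite -expr2 sqr_ge0.
Qed.

Lemma enormE u : enorm u = Num.sqrt (dotv u u).
Proof.
by rewrite /enorm dotvE; congr Num.sqrt; apply: eq_bigr => i _; rewrite expr2.
Qed.

Lemma enormN u : enorm (- u) = enorm u.
Proof. by rewrite !enormE dotvNl dotvNr opprK. Qed.

End InnerProduct.

Section Rayleigh.
Context {R : realType} {n : nat}.
Implicit Types (u w : 'cV[R]_n) (M N : 'M[R]_n).

Definition abs_sum M : R := \sum_i \sum_j `|M i j|.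

Lemma abs_sum_ge0 M : 0 <= abs_sum M.
Proof. by rewrite sumr_ge0 // => i _; rewrite sumr_ge0. Qed.

Lemma dotv_mulmx_le_abs_sum M u : dotv u (M *m u) <= abs_sum M * dotv u u.
Proof.
rewrite dotvE /abs_sum mulr_suml; apply: ler_sum => i _.
rewrite mxE mulr_sumr mulr_suml; apply: ler_sum => j _.
have ui2 := sqr_le_dotv u i; have uj2 := sqr_le_dotv u j.
have uiuj : `|u i 0| * `|u j 0| <= dotv u u.
  have := sqr_ge0 (`|u i 0| - `|u j 0|).
  rewrite -(real_normK (num_real (u i 0))) in ui2.
  rewrite -(real_normK (num_real (u j 0))) in uj2.
  nra.
apply: le_trans (ler_norm _) _; rewrite !normrM mulrCA.
exact: ler_wpM2l.
Qed.

Definition rayleigh M : set R :=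
  [set dotv u (M *m u) / dotv u u | u in [set u | u != 0]].

Lemma rayleigh_neq0 M : (0 < n)%N -> rayleigh M !=set0.
Proof.
move=> n_gt0; pose e : 'cV[R]_n := const_mx 1.
exists (dotv e (M *m e) / dotv e e), e => //=.
by apply/eqP => /matrixP /(_ (Ordinal n_gt0) 0) /eqP; rewrite !mxE oner_eq0.
Qed.

Lemma has_sup_rayleigh M : (0 < n)%N -> has_sup (rayleigh M).
Proof.
move=> n_gt0; split; first exact: rayleigh_neq0.
exists (abs_sum M) => _ [u /= u0 <-].
by rewrite ler_pdivrMr ?dotv_gt0 // dotv_mulmx_le_abs_sum.
Qed.

Lemma dotv_mulmx_le_sup_rayleigh M u : (0 < n)%N ->
  dotv u (M *m u) <= sup (rayleigh M) * dotv u u.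
Proof.
move=> n_gt0; have [->|u0] := eqVneq u 0; first by rewrite !dotv0l mulr0.
rewrite -ler_pdivrMr ?dotv_gt0 //.
by apply: sup_upper_bound; [exact: has_sup_rayleigh | exists u].
Qed.

Lemma sym_unitmx_nonpos_definite N : N^T = N -> N \in unitmx ->
  (forall w, dotv w (N *m w) <= 0) ->
  exists2 t, 0 < t & forall u, dotv u (N *m u) <= - t * dotv u u.
Proof.
move=> NT Nunit Nnonpos; pose P := invmx N; pose K := abs_sum (- P) + 1.
have K_gt0 : 0 < K by rewrite ltr_wpDl ?abs_sum_ge0.
pose t := K^-1; have t_gt0 : 0 < t by rewrite invr_gt0.
exists t => // u.
have tK : t * K = 1 by rewrite mulVf // gt_eqF.
have NPu : N *m (P *m u) = u by rewrite mulKVmx.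
have PuNu : dotv (P *m u) (N *m u) = dotv u u by rewrite dotv_mulmxr NT NPu.
have Pu_lb : - (K * dotv u u) <= dotv (P *m u) u.
  have := dotv_mulmx_le_abs_sum (- P) u; rewrite mulNmx dotvNr dotvC.
  have := dotv_ge0 u; rewrite /K; nra.
(* test the form on u + t P u, using N (u + t P u) = N u + t u *)
have := Nnonpos (u + t *: (P *m u)).
rewrite mulmxDr -scalemxAr NPu !dotvDl !dotvDr !dotvZl !dotvZr PuNu.
have : t * t * (K * dotv u u) = t * dotv u u.
  by rewrite mulrA -(mulrA t) tK mulr1.
nra.
Qed.

Lemma sup_rayleigh_eigenvalue M : (0 < n)%N -> M^T = M ->
  eigenvalue M (sup (rayleigh M)).
Proof.
move=> n_gt0 MT; set mu := sup (rayleigh M).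
rewrite /eigenvalue /eigenspace kermx_eq0 row_free_unit; apply/negP => Nunit.
have NT : (M - mu%:M)^T = M - mu%:M by rewrite linearB /= MT tr_scalar_mx.
have formN w : dotv w ((M - mu%:M) *m w) = dotv w (M *m w) - mu * dotv w w.
  by rewrite mulmxBl mul_scalar_mx dotvBr dotvZr.
have Nnonpos w : dotv w ((M - mu%:M) *m w) <= 0.
  by rewrite formN subr_le0 dotv_mulmx_le_sup_rayleigh.
have [t t_gt0 Nneg] := sym_unitmx_nonpos_definite NT Nunit Nnonpos.
suff : mu <= mu - t by lra.
apply: ge_sup; first exact: rayleigh_neq0.
move=> _ [u /= u0 <-]; rewrite ler_pdivrMr ?dotv_gt0 //.
by have := Nneg u; rewrite formN; lra.
Qed.

Lemma eigenvalue_le_sup_rayleigh M l : (0 < n)%N -> M^T = M ->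
  eigenvalue M l -> l <= sup (rayleigh M).
Proof.
move=> n_gt0 MT /eigenvalueP [v vM v0].
have Mv : M *m v^T = l *: v^T by rewrite -{1}MT -trmx_mul vM linearZ.
have := dotv_mulmx_le_sup_rayleigh M v^T n_gt0.
by rewrite Mv dotvZr ler_pM2r ?dotv_gt0 ?trmx_eq0.
Qed.

Lemma sup_eigenvalue_sym M : (0 < n)%N -> M^T = M ->
  sup [set l | eigenvalue M l] = sup (rayleigh M).
Proof.
move=> n_gt0 MT; set mu := sup (rayleigh M).
have mu_eig : eigenvalue M mu by exact: sup_rayleigh_eigenvalue.
have eig_ub : ubound [set l | eigenvalue M l] mu.
  by move=> l; exact: eigenvalue_le_sup_rayleigh.
apply/le_anti/andP; split; first by apply: ge_sup => //; exists mu.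
by apply: sup_upper_bound => //; split; exists mu.
Qed.

Lemma enorm_mulmx_le M u : (0 < n)%N -> enorm (M *m u) <= spec_norm M * enorm u.
Proof.
move=> n_gt0; have [->|u0] := eqVneq u 0.
  by rewrite mulmx0 !enormE dotv0l sqrtr0 mulr0.
have MTMT : (M^T *m M)^T = M^T *m M by rewrite trmx_mul trmxK.
have Mu2 : dotv (M *m u) (M *m u) <=
           sup [set l | eigenvalue (M^T *m M) l] * dotv u u.
  rewrite sup_eigenvalue_sym // dotv_mulmxr mulmxA dotvC.
  exact: dotv_mulmx_le_sup_rayleigh.
have s_ge0 : 0 <= sup [set l | eigenvalue (M^T *m M) l].
  by rewrite -(pmulr_lge0 _ (dotv_gt0 u0)); exact: le_trans (dotv_ge0 _) Mu2.
by rewrite !enormE /spec_norm -sqrtrM // ler_wsqrtr.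
Qed.

End Rayleigh.

Section ProximalStep.
Context {R : realType} {n : nat}.
Implicit Types (x z v b : 'cV[R]_n) (A B C : 'M[R]_n).

Lemma Bmat_add_Cmat A om th : A^T = A -> om != 0 ->
  Bmat A om th + Cmat A om th = A.
Proof.
move=> AT om0; apply/matrixP => i j; rewrite !mxE.
have [<-|ij] := eqVneq i j; first by rewrite ltnn mulr1n; field.
have Aji : A j i = A i j by rewrite -{1}AT mxE.
rewrite mulr0n Aji; have [_|_|eq_ij] := ltngtP i j; try ring.
by move/val_inj: eq_ij ij => ->; rewrite eqxx.
Qed.

Lemma residual_eq A B C b v x z : B + C = A -> B *m z + b + C *m x + v = 0 ->
  A *m z + b + v = C *m (z - x).
Proof.
move=> <- /eqP; rewrite addrC addr_eq0 => /eqP ->.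
rewrite mulmxDl mulmxBr; move: (B *m z) (C *m z) (C *m x) => Bz Cz Cx.
by apply/matrixP => i j; rewrite !mxE; ring.
Qed.

Lemma quad_first_order A b x z : A^T = A ->
  (2^-1 * quadf A z + dotv z b) - (2^-1 * quadf A x + dotv x b) =
  dotv (z - x) (A *m z + b) - 2^-1 * quadf A (x - z).
Proof.
move=> AT; have Azx : dotv z (A *m x) = dotv x (A *m z).
  by rewrite dotv_mulmxr AT dotvC.
by rewrite !quadfE !mulmxBr !dotvBl !dotvBr !dotvDr Azx; field.
Qed.

Lemma subdiff_gap_le (a c d : R) (hz hx : \bar R) : (hz < +oo)%E ->
  (hz + d%:E <= hx)%E -> ((a%:E + hz) - (c%:E + hx) <= (a - c - d)%:E)%E.
Proof.
case: hz => [rz _| |_ _] //; last by rewrite addeNy addNye leNye.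
case: hx => [rx| |] //=; last by rewrite addeNy leNye.
by rewrite -!EFinD !lee_fin; lra.
Qed.

End ProximalStep.

Theorem lemma1 (R : realType) (n : nat) (A : 'M[R]_n) (b : 'cV[R]_n)
  (phi : R -> \bar R) (om th : R) :
  (1 <= n)%N ->
  sym_psd A ->
  proper_ext phi -> lower_semicontinuous phi -> convex_ext phi ->
  0 < om < 2 -> 0 <= th -> (forall i, 0 < A i i + th) ->
  (* (a) *)
  (forall x z : 'cV[R]_n, is_T A b phi om th x z ->
     exists v, subdiff (sep_h phi) z v /\
       enorm (A *m z + b + v) <= spec_norm (Cmat A om th) * enorm (x - z)) /\
  (* (b) *)
  (forall x y z : 'cV[R]_n, is_T A b phi om th y z ->
     (fobj A b phi z - fobj A b phi x <=
       (dotv (z - x) (Cmat A om th *m (z - y))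
        - 2^-1 * quadf A (x - z))%:E)%E).
Proof.
(* The remaining hypotheses only make T well defined; once z = T(x) is given,
   the estimates use just the symmetry of A and om != 0. *)
move=> n_gt0 [AT _] _ _ _ /andP[om_gt0 _] _ _.
have BC := Bmat_add_Cmat th AT (lt0r_neq0 om_gt0).
split=> [x z [v [hv Tz]] | x y z [v [[hz_fin hv] Tz]]].
  exists v; split => //; rewrite (residual_eq BC Tz) -opprB mulmxN enormN.
  exact: enorm_mulmx_le.
apply: le_trans (subdiff_gap_le _ _ hz_fin (hv x)) _.
have vxz : dotv v (x - z) = - dotv (z - x) v by rewrite -opprB dotvNr dotvC.
rewrite lee_fin quad_first_order // -(residual_eq BC Tz) vxz opprK.
by rewrite addrAC -dotvDr.
Qed.
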